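(* Let $T_1=(Q_1,\Sigma,\Delta,R_1,q_1^0)$ and $T_2=(Q_2,\Delta,\Omega,R_2,q_2^0)$ be top-down tree transducers, let $A$ be the domain automaton of $T_2$, and let $\hat{T}_1$ be the product construction of $T_1$ and $A$. Then $\mathcal{R}(T_1)\circ\mathcal{R}(T_2)=\mathcal{R}(\hat{T}_1)\circ\mathcal{R}(T_2)$.
   Context: A top-down tree transducer $T=(Q,\Sigma,\Delta,R,q_0)$ has finite state set $Q$, ranked input/output alphabets $\Sigma,\Delta$, initial state $q_0$, and finite rule set $R$ of rules $q(a(x_1,\dots,x_k))\to t$ with $a\in\Sigma_k$ ($\Sigma_k$ = symbols of rank $k$) and $t$ a tree over $\Delta$ whose leaves may additionally be of the form $q'(x_i)$, $q'\in Q$, $i\in[k]$; rules are used as rewrite rules in the usual way. $\mathcal{R}(T)$ is the set of pairs $(s,t)$ with $t$ a tree over $\Delta$ derivable from $q_0(s)$; $\mathcal{R}_1\circ\mathcal{R}_2=\{(s,u)\mid\exists t:(s,t)\in\mathcal{R}_1,(t,u)\in\mathcal{R}_2\}$. For $q\in Q$, $a\in\Sigma_k$, $\text{rhs}_T(q,a)$ is the set of right-hand sides of rules with left-hand side $q(a(x_1,\dots,x_k))$; for a set $\Gamma$ of right-hand sides, $\Gamma[x_i]$ is the set of $q'\in Q$ with $q'(x_i)$ occurring in some tree of $\Gamma$. Domain automaton of $T$: the top-down tree automaton (transducer over $\Sigma$ with rules of the form $p(a(x_1,\dots,x_k))\to a(p_1(x_1),\dots,p_k(x_k))$) with states all subsets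 of $Q$, initial state $\{q_0\}$, rules $S(a(x_1,\dots,x_k))\to a(S_1(x_1),\dots,S_k(x_k))$ for every $a\in\Sigma_k$, nonempty $S=\{q_1,\dots,q_n\}\subseteq Q$ and nonempty $\Gamma_j\subseteq\text{rhs}_T(q_j,a)$ ($j\in[n]$), where $S_i=\bigcup_j\Gamma_j[x_i]$, and rules $\emptyset(a(x_1,\dots,x_k))\to a(\emptyset(x_1),\dots,\emptyset(x_k))$ for all $a$. Product construction of transducers $T=(Q,\Sigma,\Delta,R,q_0)$ and $T'=(Q',\Delta,\Omega,R',q'_0)$: the transducer with states $Q\times Q'$, input $\Sigma$, output $\Omega$, initial state $(q_0,q'_0)$, and, for every rule $q(a(x_1,\dots,x_k))\to\xi$ of $T$, every $p\in Q'$ and every tree $\zeta$ derivable from $p(\xi)$ using rules of $T'$ in which the leaves of $\xi$ of the form $q''(x_i)$ are treated as unrewritable symbols and a state $p'$ applied to such a leaf stays as $p'(q''(x_i))$, the rule $(q,p)(a(x_1,\dots,x_k))\to\zeta'$, where $\zeta'$ is obtained from $\zeta$ by replacing each $p'(q''(x_i))$ by $(q'',p')(x_i)$. *)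

From HB Require Import structures.
From mathcomp Require Import all_boot.
From Stdlib Require Import Relations.Relation_Operators.
From Stdlib Require List.

Set Implicit Arguments.
Unset Strict Implicit.
Unset Printing Implicit Defensive.

Record ralph := RAlph { sym :> finType; rank : sym -> nat }.

Inductive tree (L : Type) : Type := Node : L -> seq (tree L) -> tree L.
Arguments Node {L} _ _.

Fixpoint tmap (L L' : Type) (f : L -> L') (t : tree L) : tree L' :=
  let: Node l cs := t in Node (f l) (map (tmap f) cs).

Fixpoint wf_tree (L : Type) (ok : L -> nat -> bool) (t : tree L) : bool :=
  let: Node l cs := t in ok l (size cs) && all (wf_tree ok) cs.

Definition ranked (S : ralph) (t : tree S) : bool :=
  wf_tree (fun a n => n == rank a) t.

(** Right-hand sides of rules: trees over Delta whose leaves may be [q(x_i)],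
    encoded as label [inr (q, i)] with 0-based variable index [i]. *)
Definition rhs (D : ralph) (Q : Type) := tree (D + Q * nat)%type.

Definition rhs_ok (D : ralph) (Q : Type) (k : nat) (l : D + Q * nat) (n : nat) : bool :=
  match l with
  | inl d => n == rank d
  | inr (_, i) => (n == 0) && (i < k)
  end.

Inductive occurs (L : Type) (x : L) : tree L -> Prop :=
| occ_here cs : occurs x (Node x cs)
| occ_sub l cs c : List.In c cs -> occurs x c -> occurs x (Node l cs).

(** Top-down tree transducer; the rule set is a set (predicate) of rules
    [q(a(x_1..x_k)) -> t]; finiteness and well-formedness are separate predicates. *)
Record tdtt (S D : ralph) := TDTT {
  state : finType;
  rule : state -> S -> rhs D state -> Prop;
  init : state }.

Definition finite_rules (S D : ralph) (T : tdtt S D) : Prop :=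
  exists l : list (state T * S * rhs D (state T)),
    forall q a t, @rule S D T q a t <-> List.In (q, a, t) l.

Definition wf_tdtt (S D : ralph) (T : tdtt S D) : Prop :=
  forall q a t, @rule S D T q a t -> wf_tree (@rhs_ok D (state T) (rank a)) t.

(** Input trees have labels in [I];
    [head] tells which input labels are (rewritable) symbols of the input
    alphabet [S]; other labels are unrewritable.  A state [q] applied to an
    input tree [s] is the leaf labelled [inr (q, s)]. *)
Section Rewriting.
Variables (S : ralph) (O Q I : Type) (head : I -> option S)
          (rl : Q -> S -> tree (O + Q * nat)%type -> Prop).

Definition sform := tree (O + Q * tree I)%type.

(** substitute x_i := nth i ss (default [d] irrelevant for well-formed rules) *)
Fixpoint subst (d : tree I) (ss : seq (tree I)) (r : tree (O + Q * nat)) : sform :=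
  match r with
  | Node (inl o) cs => Node (inl o) (map (subst d ss) cs)
  | Node (inr (q, i)) _ => Node (inr (q, nth d ss i)) [::]
  end.

Inductive step : sform -> sform -> Prop :=
| step_root q x ss a r :
    head x = Some a -> size ss = rank a -> rl q a r ->
    step (Node (inr (q, Node x ss)) [::]) (subst (Node x ss) ss r)
| step_ctx l ts1 t t' ts2 :
    step t t' ->
    step (Node l (ts1 ++ t :: ts2)) (Node l (ts1 ++ t' :: ts2)).

Definition derives : sform -> sform -> Prop := clos_refl_trans sform step.

End Rewriting.

Definition trel (S D : ralph) (T : tdtt S D) (s : tree S) (t : tree D) : Prop :=
  ranked s /\ ranked t /\
  derives (fun a : S => Some a) (@rule S D T)
    (Node (inr (init T, s)) [::]) (tmap inl t).

Definition rcomp (A B C : Type) (R1 : A -> B -> Prop) (R2 : B -> C -> Prop)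
  (a : A) (c : C) : Prop := exists b, R1 a b /\ R2 b c.

Definition dom_rule (S D : ralph) (T : tdtt S D)
  (P : {set state T}) (a : S) (r : rhs S {set state T}) : Prop :=
  (P = set0 /\
     r = Node (inl a) (mkseq (fun i => Node (inr (set0, i)) [::]) (rank a)))
  \/
  (P != set0 /\
   exists G : state T -> rhs D (state T) -> Prop,
     (forall q, q \in P -> (exists t, G q t) /\ (forall t, G q t -> @rule S D T q a t)) /\
     exists Ps : seq {set state T},
       size Ps = rank a /\
       r = Node (inl a) (mkseq (fun i => Node (inr (nth set0 Ps i, i)) [::]) (rank a)) /\
       forall i, i < rank a -> forall q',
         q' \in nth set0 Ps i <->
         exists q, q \in P /\ exists t, G q t /\ occurs (inr (q', i)) t).

Definition dom_aut (S D : ralph) (T : tdtt S D) : tdtt S S :=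
  @TDTT S S {set state T} (@dom_rule S D T) [set init T].

Definition rhs_head (D : ralph) (Q : Type) (l : D + Q * nat) : option D :=
  match l with inl d => Some d | inr _ => None end.

(** [pconv z z']: z' is obtained from z (a tree over O whose other leaves are
    p'(q''(x_i))) by replacing each p'(q''(x_i)) by (q'',p')(x_i). *)
Inductive pconv (O Q Q' D : Type) :
  tree (O + Q' * tree (D + Q * nat))%type -> tree (O + (Q * Q') * nat)%type -> Prop :=
| pc_node o cs cs' :
    List.Forall2 (@pconv O Q Q' D) cs cs' -> pconv (Node (inl o) cs) (Node (inl o) cs')
| pc_leaf p q i :
    pconv (Node (inr (p, Node (inr (q, i)) [::])) [::]) (Node (inr ((q, p), i)) [::]).

Definition prod_rule (S D O : ralph) (T : tdtt S D) (T' : tdtt D O)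
  (qp : (state T * state T')%type) (a : S) (z' : rhs O (state T * state T')%type) : Prop :=
  exists xi, @rule S D T qp.1 a xi /\
  exists z, derives (@rhs_head D (state T)) (@rule D O T')
              (Node (inr (qp.2, xi)) [::]) z /\
            pconv z z'.

Definition prod_tdtt (S D O : ralph) (T : tdtt S D) (T' : tdtt D O) : tdtt S O :=
  @TDTT S O (state T * state T')%type (@prod_rule S D O T T') (init T, init T').

From HB Require Import structures.
From mathcomp Require Import all_boot boolp.
From Stdlib Require Import Relations.Relation_Operators Relations.Operators_Properties.
From Stdlib Require List.

Set Implicit Arguments.
Unset Strict Implicit.
Unset Printing Implicit Defensive.

(* The domain automaton A of T2 is a top-down automaton: each of its rules
   copies the input symbol and only assigns states to the children.  Hence a
   rule of the product T1 x A erases, by forgetting the A-states, to a rule of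
   T1, so R(T1 x A) is contained in R(T1).  Conversely, if t is in the domain of
   T2, then A has an accepting run on t: a node carries a set P of states that
   all have an output there, Gamma_q consists of the rules of T2 that still
   lead to an output, and a child receives the states called by these rules.
   Threading this run through a derivation of t from s by T1 gives a derivation
   of T1 x A. *)

Lemma tree_ind_in (L : Type) (P : tree L -> Prop) :
  (forall l cs, (forall c, List.In c cs -> P c) -> P (Node l cs)) -> forall t, P t.
Proof.
move=> H; refine (fix F t := match t with Node l cs => H l cs _ end).
refine ((fix G cs := match cs return forall c, List.In c cs -> P c with
 | [::] => fun c hin => False_ind _ hin
 | c0 :: cs0 => fun c hin => match hin with
     | or_introl e => eq_ind c0 P (F c0) c e
     | or_intror h => G cs0 c h end end) cs).
Qed.

Lemma In_nth (T : Type) (x0 : T) (s : seq T) i : i < size s -> List.In (nth x0 s i) s.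
Proof. by elim: s i => [|x s IH] [|i] //= hi; [left | right; apply: IH]. Qed.

Lemma all_In (T : Type) (p : pred T) s x : all p s -> List.In x s -> p x.
Proof. by elim: s => [|y s IH] //= /andP [py ps] [<-|hx] //; apply: IH. Qed.

Lemma Forall2_nthP (A B : Type) {R : A -> B -> Prop} (x0 : A) (y0 : B) xs ys :
  List.Forall2 R xs ys <->
  size xs = size ys /\ forall i, i < size xs -> R (nth x0 xs i) (nth y0 ys i).
Proof.
split.
- elim=> [|x y xs' ys' hxy _ [hs IH]] //=.
  by split=> [|[|i] //= hi]; [rewrite hs | apply: IH].
- elim: xs ys => [|x xs IH] [|y ys] //= [] // [hs] h.
  by constructor; [apply: (h 0) | apply: IH; split=> // i; apply: (h i.+1)].
Qed.

Lemma Forall2_In (A B : Type) (R : A -> B -> Prop) xs ys x :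
  List.Forall2 R xs ys -> List.In x xs -> exists2 y, List.In y ys & R x y.
Proof.
elim=> [|x' y xs' ys' hxy _ IH] //= [<-|/IH [y' hy' hxy']]; first by exists y; [left|].
by exists y'; [right|].
Qed.

Lemma Forall2_mapl (A A' B : Type) (f : A -> A') (R : A' -> B -> Prop) xs ys :
  List.Forall2 R (map f xs) ys <-> List.Forall2 (fun x y => R (f x) y) xs ys.
Proof.
split; last by elim=> //= *; constructor.
by elim: xs ys => [|x xs IH] ys h; inversion h; constructor=> //; apply: IH.
Qed.

Lemma Forall2_mapr (A B B' : Type) (f : B -> B') (R : A -> B' -> Prop) xs ys :
  List.Forall2 R xs (map f ys) <-> List.Forall2 (fun x y => R x (f y)) xs ys.
Proof.
split; last by elim=> //= *; constructor.
by elim: ys xs => [|y ys IH] xs h; inversion h; constructor=> //; apply: IH.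
Qed.

Lemma Forall2_impl2 (A B : Type) (R1 R2 R : A -> B -> Prop) xs ys :
  (forall x y, R1 x y -> R2 x y -> R x y) ->
  List.Forall2 R1 xs ys -> List.Forall2 R2 xs ys -> List.Forall2 R xs ys.
Proof.
move=> H h1; elim: h1 => [|x y xs' ys' h _ IH] h2; inversion h2; constructor; auto.
Qed.

Lemma Forall2_map_eq (A B C : Type) (R : A -> B -> Prop) (f : B -> C) (g : A -> C) xs ys :
  List.Forall2 R xs ys -> (forall x y, List.In x xs -> R x y -> f y = g x) ->
  map f ys = map g xs.
Proof.
elim=> [|x y xs' ys' hxy _ IH] //= H.
by rewrite (H x y) ?IH //; [move=> x' y' hx'; apply: H; right | left].
Qed.

Lemma nth_choice2 (A B : Type) (x0 : A) (y0 : B) n (R : nat -> A -> B -> Prop) :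
  (forall i, i < n -> exists x y, R i x y) ->
  exists xs ys, [/\ size xs = n, size ys = n &
                    forall i, i < n -> R i (nth x0 xs i) (nth y0 ys i)].
Proof.
elim: n R => [|n IH] R H; first by exists [::], [::].
have [x [y hxy]] := H 0 isT.
have [|xs [ys [hxs hys h]]] := IH (fun i => R i.+1); first by move=> i; apply: (H i.+1).
exists (x :: xs), (y :: ys); split=> /=; [by rewrite hxs | by rewrite hys |].
by move=> [|i] //= /h.
Qed.

Section BigStep.
Variables (S : ralph) (O Q I : Type) (head : I -> option S)
          (rl : Q -> S -> tree (O + Q * nat)%type -> Prop).

Inductive bderives : sform O Q I -> sform O Q I -> Prop :=
| bderives_node l cs cs' :
    List.Forall2 bderives cs cs' -> bderives (Node l cs) (Node l cs')
| bderives_root q x ss a r z :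
    head x = Some a -> size ss = rank a -> rl q a r ->
    bderives (subst (Node x ss) ss r) z -> bderives (Node (inr (q, Node x ss)) [::]) z.

Lemma bderives_nested_ind (P : sform O Q I -> sform O Q I -> Prop) :
  (forall l cs cs', List.Forall2 P cs cs' -> P (Node l cs) (Node l cs')) ->
  (forall q x ss a r z, head x = Some a -> size ss = rank a -> rl q a r ->
     bderives (subst (Node x ss) ss r) z -> P (subst (Node x ss) ss r) z ->
     P (Node (inr (q, Node x ss)) [::]) z) ->
  forall t z, bderives t z -> P t z.
Proof.
move=> Hnode Hroot; fix F 3 => t z [l cs cs' h | q x ss a r z' hx hs hr h].
- apply: Hnode.
  exact: ((fix G cs cs' (h : List.Forall2 bderives cs cs') {struct h} :=
    match h in List.Forall2 _ cs cs' return List.Forall2 P cs cs' with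
    | List.Forall2_nil => List.Forall2_nil _
    | List.Forall2_cons _ _ _ _ hc hcs => List.Forall2_cons _ _ (F _ _ hc) (G _ _ hcs)
    end) cs cs' h).
- exact: Hroot hx hs hr h (F _ _ h).
Qed.

Lemma bderives_refl t : bderives t t.
Proof.
elim/tree_ind_in: t => l cs IH; constructor.
elim: cs IH => [|c cs IHcs] IH; constructor; first by apply: IH; left.
by apply: IHcs => c' h; apply: IH; right.
Qed.

Lemma step_bderives t t' z : step head rl t t' -> bderives t' z -> bderives t z.
Proof.
move=> h; elim: h z => [q x ss a r hx hs hr | l ts1 t0 t0' ts2 _ IH] z hz.
  exact: bderives_root hx hs hr hz.
have [cs' -> hcs] : exists2 cs', z = Node l cs' &
    List.Forall2 bderives (ts1 ++ t0' :: ts2) cs'.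
  by inversion hz; [exists cs' | case: ts1 {hz} H0].
have [cs1 [[|c cs2] [h1 [h2 ->]]]] := List.Forall2_app_inv_l _ _ hcs; first by inversion h2.
case/List.Forall2_cons_iff: h2 => hc h2.
by apply: bderives_node; apply: List.Forall2_app h1 (List.Forall2_cons _ _ (IH _ hc) h2).
Qed.

Lemma derives_ctx l ts1 ts1' ts2 :
  List.Forall2 (derives head rl) ts1 ts1' ->
  derives head rl (Node l (ts2 ++ ts1)) (Node l (ts2 ++ ts1')).
Proof.
move=> h; elim: h ts2 => [|t t' ts ts' ht _ IH] ts2; first exact: rt_refl.
have := IH (rcons ts2 t'); rewrite !cat_rcons; apply: rt_trans.
elim: ht => [x y hxy | x | x y z _ IHxy _ IHyz].
- by apply: rt_step; constructor.
- exact: rt_refl.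
- exact: rt_trans IHxy IHyz.
Qed.

Lemma bderivesP t z : derives head rl t z <-> bderives t z.
Proof.
split.
- move=> hd; elim: (clos_rt_rt1n _ _ _ _ hd) => [x | x y z' h _].
    exact: bderives_refl.
  exact: step_bderives h.
- elim/bderives_nested_ind: t z / => [l cs cs' h | q x ss a r z hx hs hr _ IH].
    exact: (derives_ctx l [::] h).
  by apply: rt_trans IH; apply: rt_step; apply: step_root hx hs hr.
Qed.

Lemma bderives_state_inv q x ss (u : tree O) :
  bderives (Node (inr (q, Node x ss)) [::]) (tmap inl u) ->
  exists a r, [/\ head x = Some a, size ss = rank a, rl q a r &
                  bderives (subst (Node x ss) ss r) (tmap inl u)].
Proof. by case: u => o us h; inversion h; exists a, r. Qed.

Lemma bderives_inl_inv o cs (u : tree O) :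
  bderives (Node (inl o) cs) (tmap inl u) ->
  exists2 us, u = Node o us & List.Forall2 bderives cs (map (tmap inl) us).
Proof. by case: u => o' us h; inversion h; exists us. Qed.

End BigStep.

Lemma bderives_occurs (S O : ralph) (Q I : Type) (head : I -> option S)
    (rl : Q -> S -> rhs O Q -> Prop) k (r : rhs O Q) q i d ss (u : tree O) :
  wf_tree (rhs_ok k) r -> occurs (inr (q, i)) r ->
  bderives head rl (subst d ss r) (tmap inl u) ->
  exists u', bderives head rl (Node (inr (q, nth d ss i)) [::]) (tmap inl u').
Proof.
move=> + hocc; elim: hocc u => [cs | l cs c hc _ IH] u; first by exists u.
case: l => [o | [q0 j]] /= /andP [hl hall]; last by case: cs {IH} hall hc hl.
move=> hd; have [us _ hcs] := bderives_inl_inv hd.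
have [_ /List.in_map_iff [uc [<- _]] hb] := Forall2_In hcs (List.in_map (subst d ss) _ _ hc).
exact: IH (all_In hall hc) hb.
Qed.

Definition map_state (O X Q Q' : Type) (f : Q' -> Q) (l : O + Q' * X) : O + Q * X :=
  match l with inl o => inl o | inr (q, x) => inr (f q, x) end.

Lemma map_state_subst (O Q Q' I : Type) (f : Q' -> Q) (d : tree I) ss
    (r : tree (O + Q' * nat)) :
  tmap (map_state f) (subst d ss r) = subst d ss (tmap (map_state f) r).
Proof.
elim/tree_ind_in: r => [[o | [q i]] cs IH] //=.
by congr Node; rewrite -!map_comp; apply: List.map_ext_in.
Qed.

Lemma map_state_inl (O X Q Q' : Type) (f : Q' -> Q) (t : tree O) :
  tmap (@map_state O X Q Q' f) (tmap inl t) = tmap inl t.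
Proof.
elim/tree_ind_in: t => o cs IH /=.
by congr Node; rewrite -map_comp; apply: List.map_ext_in.
Qed.

Definition automaton_rhs (D : ralph) (Q : Type) (a : D) (f : nat -> Q) : rhs D Q :=
  Node (inl a) (mkseq (fun i => Node (inr (f i, i)) [::]) (rank a)).

Lemma subst_automaton_rhs (D : ralph) (Q I : Type) (a : D) (f : nat -> Q) (d : tree I) ss :
  subst d ss (automaton_rhs a f) =
  Node (inl a) (mkseq (fun i => Node (inr (f i, nth d ss i)) [::]) (rank a)).
Proof. by rewrite /= -map_comp. Qed.

Section Automata.
Variables (D : ralph) (A : tdtt D D).

Definition is_automaton : Prop :=
  forall p a r, @rule D D A p a r -> exists f, r = automaton_rhs a f.

Inductive accepts : state A -> tree D -> Prop :=
| accepts_node p a ts (f : nat -> state A) :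
    size ts = rank a -> @rule D D A p a (automaton_rhs a f) ->
    (forall i, i < rank a -> accepts (f i) (nth (Node a [::]) ts i)) ->
    accepts p (Node a ts).

End Automata.

Arguments accepts {D} A _ _.

Section ProductErasure.
Variables (S D : ralph) (T : tdtt S D) (A : tdtt D D).
Hypothesis automatonA : is_automaton A.

Fixpoint erase (z : sform D (state A) (D + state T * nat)) : rhs D (state T) :=
  match z with
  | Node (inl d) cs => Node (inl d) (map erase cs)
  | Node (inr (_, r)) _ => r
  end.

Lemma erase_step z z' : step (@rhs_head D (state T)) (@rule D D A) z z' -> erase z = erase z'.
Proof.
elim=> [q [a | //] ss a' r [<-] hs /automatonA [f ->] | [o | //] ts1 t t' ts2 _ IH].
  by rewrite subst_automaton_rhs /= -map_comp -hs -{1}(mkseq_nth (Node (inl a) ss) ss).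
by rewrite /= !map_cat /= IH.
Qed.

Lemma erase_derives z z' :
  derives (@rhs_head D (state T)) (@rule D D A) z z' -> erase z = erase z'.
Proof. by elim=> // [x y /erase_step | x y z'' _ -> _ ->]. Qed.

Lemma pconv_erase z z' : pconv z z' -> tmap (map_state fst) z' = erase z.
Proof.
elim/tree_ind_in: z z' => l cs IH z' h; inversion h as [o ? cs' hcs |] => //=.
by congr Node; apply: (Forall2_map_eq hcs) => x y hx; apply: IH.
Qed.

Lemma prod_rule_erase qp a z' :
  @prod_rule S D D T A qp a z' -> @rule S D T qp.1 a (tmap (map_state fst) z').
Proof. by case=> r [hr [z [/erase_derives hz /pconv_erase ->]]]; rewrite -hz. Qed.

Lemma bderives_prod_erase X Y :
  bderives (fun a : S => Some a) (@rule S D (prod_tdtt T A)) X Y ->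
  bderives (fun a : S => Some a) (@rule S D T)
    (tmap (map_state fst) X) (tmap (map_state fst) Y).
Proof.
elim/bderives_nested_ind => [l cs cs' IH | q x ss a z' z hx hs /prod_rule_erase hr _ IH].
  by apply: bderives_node; apply/Forall2_mapl/Forall2_mapr.
by apply: bderives_root hx hs hr _; rewrite -map_state_subst.
Qed.

Lemma trel_prod_automaton s t : trel (prod_tdtt T A) s t -> trel T s t.
Proof.
case=> rs [rt /bderivesP/bderives_prod_erase]; rewrite map_state_inl => hd.
by split=> //; split=> //; apply/bderivesP.
Qed.

End ProductErasure.

Section ProductSimulation.
Variables (S D : ralph) (T : tdtt S D) (A : tdtt D D).
Hypothesis wfT : wf_tdtt T.
Notation Q := (state T).
Notation bderivesT := (bderives (fun a : S => Some a) (@rule S D T)).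
Notation bderivesA := (bderives (@rhs_head D Q) (@rule D D A)).
Notation bderivesTA := (bderives (fun a : S => Some a) (@rule S D (prod_tdtt T A))).

(* [annot X t]: in every pending state [((q, p), s)] of [X], the A-state [p]
   accepts the subtree of [t] that this state has to produce. *)
Inductive annot : sform D (Q * state A) S -> tree D -> Prop :=
| annot_node d cs ts : List.Forall2 annot cs ts -> annot (Node (inl d) cs) (Node d ts)
| annot_state q p s t : accepts A p t -> annot (Node (inr ((q, p), s)) [::]) t.

(* [z'] is [r] with each leaf [q(x_i)] also labelled by the state that the run
   of [A] started in [p] reaches there; [z] is the same tree in the form
   produced by the derivation of [A]. *)
Definition annotated_rhs (d0 : tree S) ss p (r : rhs D Q) t
    (z : sform D (state A) (D + Q * nat)) (z' : rhs D (Q * state A)) :=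
  [/\ bderivesA (Node (inr (p, r)) [::]) z, pconv z z',
      tmap (map_state fst) z' = r & annot (subst d0 ss z') t].

Lemma prod_rhs_annot k (d0 : tree S) ss (r : rhs D Q) :
  wf_tree (rhs_ok k) r -> forall t p, accepts A p t ->
  bderivesT (subst d0 ss r) (tmap inl t) -> exists z z', annotated_rhs d0 ss p r t z z'.
Proof.
elim/tree_ind_in: r => [[o | [q i]] rs IH] /= /andP [hl hall] t p; last first.
  case: rs {IH hall} hl => // _ hp _.
  exists (Node (inr (p, Node (inr (q, i)) [::])) [::]), (Node (inr ((q, p), i)) [::]).
  by split; [apply: bderives_refl | constructor | | constructor].
move/eqP: hl => hl [{}p a us f hus hrule hch] hd.
have [_ [ea <-] hcs] := bderives_inl_inv hd; subst a.
pose r0 : rhs D Q := Node (inl o) [::].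
pose z0 : sform D (state A) (D + Q * nat) := Node (inl o) [::].
pose z0' : tree (D + Q * state A * nat) := Node (inl o) [::].
have [|zs [z's [hzs hz's hch']]] := @nth_choice2 _ _ z0 z0' (rank o)
    (fun i => annotated_rhs d0 ss (f i) (nth r0 rs i) (nth (Node o [::]) us i)).
  move=> i hi; have hi' : i < size rs by rewrite hl.
  apply: IH (In_nth _ hi') (all_In hall (In_nth _ hi')) _ _ (hch i hi) _.
  move/(Forall2_nthP (subst d0 ss r0) (tmap inl (Node o [::]))): hcs => [_ /(_ i)].
  by rewrite !size_map (nth_map r0) // (nth_map (Node o [::])) ?hus -?hl //; apply.
exists (Node (inl o) zs), (Node (inl o) z's); split.
- apply: (bderives_root (x := inl o) erefl hl hrule).
  rewrite subst_automaton_rhs; apply/bderives_node/(Forall2_nthP z0 z0).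
  rewrite size_mkseq hzs; split=> // i hi.
  by rewrite nth_mkseq // (set_nth_default r0) ?hl //; case: (hch' i hi).
- by constructor; apply/(Forall2_nthP z0 z0'); rewrite hzs hz's; split=> // i /hch' [].
- congr Node; apply: (eq_from_nth (x0 := r0)); rewrite size_map hz's // => i hi.
  by rewrite (nth_map z0') ?hz's //; case: (hch' i hi).
- constructor; apply/(Forall2_nthP (subst d0 ss z0') (Node o [::])).
  rewrite size_map hz's hus; split=> // i hi.
  by rewrite (nth_map z0') ?hz's //; case: (hch' i hi).
Qed.

Lemma prod_bderives X Y : bderivesT X Y -> forall t, Y = tmap inl t ->
  forall Xh, tmap (map_state fst) Xh = X -> annot Xh t -> bderivesTA Xh (tmap inl t).
Proof.
elim/bderives_nested_ind: X Y / => [l cs cs' IH | q x ss a r z [<-] hs hr hd IH] t eY Xh eXh.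
  case: t eY => o ts [el ecs]; subst l cs'.
  case: Xh eXh => [[o' | [[q p] s]] csh] //= [eo ecs] hann; subst o' cs.
  have hcs : List.Forall2 annot csh ts by inversion hann.
  apply/bderives_node/Forall2_mapr.
  move/Forall2_mapl/Forall2_mapr: IH => IH.
  by apply: Forall2_impl2 IH hcs => c u hc; apply: hc.
case: Xh eXh => [[// | [[q' p] s]] [|//]] /= [-> ->] hann; subst z.
have hacc : accepts A p t by inversion hann.
have [z [z' [hz hpc herase hann']]] := prod_rhs_annot (wfT hr) hacc hd.
apply: (@bderives_root _ _ _ _ _ _ (q, p) x ss x z' _ erefl hs).
  by exists r; split=> //; exists z; split=> //; apply/bderivesP.
by apply: IH => //; rewrite map_state_subst herase.
Qed.

Lemma trel_prod_accepts s t :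
  trel T s t -> accepts A (init A) t -> trel (prod_tdtt T A) s t.
Proof.
case=> rs [rt /bderivesP hd] hacc; split=> //; split=> //; apply/bderivesP.
apply: (prod_bderives hd erefl (Xh := Node (inr ((init T, init A), s)) [::])) => //.
exact: annot_state.
Qed.

End ProductSimulation.

Section DomainAutomaton.
Variables (D O : ralph) (T : tdtt D O).
Notation bderivesT := (bderives (fun a : D => Some a) (@rule D O T)).

Lemma dom_aut_is_automaton : is_automaton (dom_aut T).
Proof. by move=> P a r [[_ ->] | [_ [G [_ [Ps [_ [-> _]]]]]]]; eexists. Qed.

Hypothesis wfT : wf_tdtt T.

Lemma accepts_dom_aut t : ranked t -> forall P : {set state T},
  (forall q, q \in P -> exists u, bderivesT (Node (inr (q, t)) [::]) (tmap inl u)) ->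
  accepts (dom_aut T) P t.
Proof.
elim/tree_ind_in: t => a ts IH /= /andP [/eqP hsz hall] P hP.
have IHi i : i < rank a -> forall P' : {set state T},
    (forall q, q \in P' -> exists u,
       bderivesT (Node (inr (q, nth (Node a [::]) ts i)) [::]) (tmap inl u)) ->
    accepts (dom_aut T) P' (nth (Node a [::]) ts i).
  by rewrite -hsz => hi; apply: IH (In_nth _ hi) (all_In hall (In_nth _ hi)).
have [-> | P0] := eqVneq P set0.
  apply: (@accepts_node _ (dom_aut T) set0 a ts (fun=> set0)) => //; first by left.
  by move=> i hi; apply: IHi => // q; rewrite in_set0.
pose G q r := @rule D O T q a r /\ exists u, bderivesT (subst (Node a ts) ts r) (tmap inl u).
pose Ps := mkseq (fun i => [set q' | `[< exists q, q \in P /\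
                     exists r, G q r /\ occurs (inr (q', i)) r >] ]) (rank a).
apply: (@accepts_node _ (dom_aut T) P a ts (nth set0 Ps)) => //.
  right; split=> //; exists G; split.
    move=> q /hP [u hu]; have [_ [r [[<-] _ hr hd]]] := bderives_state_inv hu.
    by split=> [|r' []//]; exists r; split=> //; exists u.
  exists Ps; rewrite size_mkseq; split=> //; split=> // i hi q'.
  by rewrite nth_mkseq // inE; split=> /asboolP.
move=> i hi; rewrite nth_mkseq //; apply: IHi => // q'.
rewrite inE => /asboolP [q [_ [r [[hr [u hu]] hocc]]]].
have [u' hu'] := bderives_occurs (wfT hr) hocc hu.
by exists u'; rewrite (set_nth_default (Node a ts)) ?hsz.
Qed.

End DomainAutomaton.

Theorem lemma3 (S D O : ralph) (T1 : tdtt S D) (T2 : tdtt D O) :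
  finite_rules T1 -> wf_tdtt T1 -> finite_rules T2 -> wf_tdtt T2 ->
  forall (s : tree S) (u : tree O),
    rcomp (trel T1) (trel T2) s u <->
    rcomp (trel (prod_tdtt T1 (dom_aut T2))) (trel T2) s u.
Proof.
move=> _ wf1 _ wf2 s u; split=> -[t [st tu]]; exists t; split=> //.
  apply: trel_prod_accepts => //.
  case: tu => rt [_ /bderivesP hd]; apply: accepts_dom_aut => // q.
  by rewrite inE => /eqP ->; exists u.
apply: (trel_prod_automaton _ st); exact: dom_aut_is_automaton.
Qed.
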